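(* Let $\mathbb{R}^n$ and $\mathbb{R}^m$ be equipped with arbitrary norms $\|\cdot\|$, with dual norms $\|\cdot\|_*$. Let $P:\mathbb{R}^n\to\mathbb{R}^m$ be differentiable on all of $\mathbb{R}^n$ with $\|P'(x^a)-P'(x^b)\|\le L\|x^a-x^b\|$ for all $x^a,x^b\in\mathbb{R}^n$ (some $L>0$), and suppose there is $\mu>0$ with $\|P'(x)^T h\|_*\ge\mu\|h\|_*$ for all $x\in\mathbb{R}^n$, $h\in\mathbb{R}^m$. Then for any $x^0\in\mathbb{R}^n$ the sequence generated by Algorithm 1 converges to a solution of $P(x)=0$.
   Context: For a vector $c$, the dual norm is $\|c\|_*=\sup_{\|x\|=1}(c,x)$; the norm of $P'(x)$ is the operator norm subordinate to the chosen vector norms. Algorithm 1 (Basic Newton method): starting from $x^0$, for $k\ge0$ let $z^k$ be any solution of $\min\{\|z\|: P'(x^k)z=P(x^k)\}$ and set $x^{k+1}=x^k-\min\{1,\frac{\mu^2}{L\|P(x^k)\|}\}z^k$ (with step $1$ and $z^k=0$ if $P(x^k)=0$). *)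

From HB Require Import structures.
From mathcomp Require Import all_boot all_order all_algebra.
From mathcomp Require Import all_classical all_reals all_analysis.
Set Implicit Arguments. Unset Strict Implicit. Unset Printing Implicit Defensive.
Import Order.TTheory GRing.Theory Num.Theory.
Import numFieldNormedType.Exports.
Local Open Scope classical_set_scope.
Local Open Scope ring_scope.

Definition is_norm (R : realType) (k : nat) (N : 'cV[R]_k -> R) : Prop :=
  [/\ forall x, N x = 0 -> x = 0,
      forall (a : R) x, N (a *: x) = `|a| * N x
    & forall x y, N (x + y) <= N x + N y].

Definition pairing (R : realType) (k : nat) (c x : 'cV[R]_k) : R :=
  (c^T *m x) ord0 ord0.

Definition dualn (R : realType) (k : nat) (N : 'cV[R]_k -> R) (c : 'cV[R]_k) : R :=
  sup [set pairing c x | x in [set x | N x = 1]].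

Definition opnorm (R : realType) (n m : nat) (Nn : 'cV[R]_n -> R)
  (Nm : 'cV[R]_m -> R) (A : 'M[R]_(m, n)) : R :=
  sup [set Nm (A *m x) | x in [set x | Nn x = 1]].

(* One step of Algorithm 1 (Basic Newton method) with derivative J. *)
Definition newton_step (R : realType) (n m : nat) (Nn : 'cV[R]_n -> R)
  (Nm : 'cV[R]_m -> R) (P : 'cV[R]_n -> 'cV[R]_m) (J : 'cV[R]_n -> 'M[R]_(m, n))
  (L mu : R) (xk zk xk1 : 'cV[R]_n) : Prop :=
  if P xk == 0 then zk = 0 /\ xk1 = xk - 1 *: zk
  else [/\ J xk *m zk = P xk,
           (forall z, J xk *m z = P xk -> Nn zk <= Nn z)
         & xk1 = xk - Num.min 1 (mu ^+ 2 / (L * Nm (P xk))) *: zk].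

(* The lower bound mu on the dual
   norm of J(x)^T makes every system J(x) z = b solvable with
   ||z|| <= ||b|| / mu (strictly separate b from the image of a ball), so the
   minimal-norm Newton direction satisfies ||z_k|| <= ||P(x_k)|| / mu.  A norm
   is the supremum of the functionals of dual norm at most 1, which turns the
   Lipschitz bound on J into the Taylor estimate
   ||P(x + d) - P(x) - J(x) d|| <= L ||d||^2 / 2.  With the damped step
   g = min(1, mu^2 / (L ||P(x_k)||)) they give
   ||P(x_{k+1})|| <= (1 - g / 2) ||P(x_k)||.  Since the residual never
   increases, g stays bounded below, so the residual decays geometrically and
   the steps, mu ||x_{k+1} - x_k|| <= 2 (||P(x_k)|| - ||P(x_{k+1})||),
   telescope: (x_k) is Cauchy and P vanishes at its limit. *)

From HB Require Import structures.
From mathcomp Require Import all_boot all_order all_algebra.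
From mathcomp Require Import all_classical all_reals all_analysis.
From mathcomp Require Import ring lra.
Import Order.TTheory GRing.Theory Num.Theory.
Import numFieldNormedType.Exports.
Set Implicit Arguments. Unset Strict Implicit. Unset Printing Implicit Defensive.
Local Open Scope classical_set_scope.
Local Open Scope ring_scope.

Lemma lipschitz_continuous (R : realType) (V W : normedModType R) (f : V -> W) (C : R) :
  (forall x y, `|f x - f y| <= C * `|x - y|) -> continuous f.
Proof.
move=> fC x; apply/cvgrPdist_lt => e e0.
have C1 : 0 < `|C| + 1 by rewrite ltr_pwDr.
near=> y.
have xy : `|x - y| < e / (`|C| + 1).
  by near: y; apply: cvgr_dist_lt => //; rewrite divr_gt0.
apply: le_lt_trans (fC x y) _.
apply: le_lt_trans (ler_wpM2r (normr_ge0 _) (ler_norm C)) _.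
apply: le_lt_trans (ler_wpM2l (normr_ge0 C) (ltW xy)) _.
rewrite mulrA ltr_pdivrMr //; nra.
Unshelve. all: by end_near. Qed.

Section MatrixNorm.
Variable R : realType.

Lemma mx_norm_entry_le m n (x : 'M[R]_(m, n)) i j : `|x i j| <= `|x|.
Proof. by rewrite [leRHS]/Num.norm /= mx_normrE (bigD1 (i, j)) //= le_max lexx. Qed.

Lemma mx_seminorm_le m n (g : 'M[R]_(m, n) -> R) :
  (forall a x, g (a *: x) = `|a| * g x) -> (forall x y, g (x + y) <= g x + g y) ->
  exists2 C, 0 <= C & forall x, g x <= C * `|x|.
Proof.
move=> gZ gD.
have g0 : g 0 = 0 by have := gZ 0 0; rewrite scale0r normr0 mul0r.
have g_ge0 x : 0 <= g x.
  have := gD x (- x); rewrite subrr g0 -scaleN1r gZ normrN normr1 mul1r; lra.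
have g_sum (r : seq ('I_m * 'I_n)) F : g (\sum_(i <- r) F i) <= \sum_(i <- r) g (F i).
  elim/big_rec2: _ => [|i y1 y2 _ IH]; first by rewrite g0.
  by apply: le_trans (gD _ _) _; rewrite lerD2l.
exists (\sum_(ij : 'I_m * 'I_n) g (delta_mx ij.1 ij.2)).
  by apply: sumr_ge0 => ij _; apply: g_ge0.
move=> x; rewrite {1}(matrix_sum_delta x) pair_bigA /= mulr_suml.
apply: le_trans (g_sum _ _) _; apply: ler_sum => ij _.
by rewrite gZ mulrC ler_wpM2l ?g_ge0 ?mx_norm_entry_le.
Qed.

Lemma mx_linear_le m n (W : normedModType R) (f : {linear 'M[R]_(m, n) -> W}) :
  exists2 C, 0 <= C & forall x, `|f x| <= C * `|x|.
Proof.
apply: (mx_seminorm_le (g := fun x => `|f x|)) => [a x|x y].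
  by rewrite linearZ normrZ.
by rewrite linearD ler_normD.
Qed.

Lemma mx_linear_continuous m n (W : normedModType R)
    (f : {linear 'M[R]_(m, n) -> W}) : continuous f.
Proof.
have [C _ fC] := mx_linear_le f.
by apply: (lipschitz_continuous (C := C)) => x y; rewrite -linearB.
Qed.

Lemma cV_bounded_closed_compact k (A : set 'cV[R]_k) M :
  (forall v, A v -> `|v| <= M) -> closed A -> compact A.
Proof.
move=> AM Acl.
have -> : A = trmx @` [set v : 'rV[R]_k | A v^T].
  apply/seteqP; split => [x Ax|_ [v Av <-] //].
  by exists x^T; rewrite /= trmxK.
apply: continuous_compact.
  by apply: continuous_subspaceT; apply: mx_linear_continuous.
have [C C0 hC] := mx_linear_le (@trmx R k 1).
apply: bounded_closed_compact.
  exists (C * M); split => [|M' CM' v /= Av]; first exact: num_real.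
  rewrite -[v]trmxK; apply: le_trans (hC _) _; apply: ltW; apply: le_lt_trans CM'.
  by rewrite ler_wpM2l ?AM.
by apply: preimage_closed => // v _; apply: mx_linear_continuous.
Qed.

End MatrixNorm.

Section Norm.
Variables (R : realType) (k : nat) (N : 'cV[R]_k -> R).
Hypothesis Nnorm : is_norm N.

Lemma isnorm_eq0 x : N x = 0 -> x = 0.
Proof. by case: Nnorm => + _ _; apply. Qed.

Lemma isnormZ a x : N (a *: x) = `|a| * N x.
Proof. by case: Nnorm. Qed.

Lemma ler_isnormD x y : N (x + y) <= N x + N y.
Proof. by case: Nnorm. Qed.

Lemma isnorm0 : N 0 = 0.
Proof. by have := isnormZ 0 0; rewrite scale0r normr0 mul0r. Qed.

Lemma isnormN x : N (- x) = N x.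
Proof. by rewrite -scaleN1r isnormZ normrN normr1 mul1r. Qed.

Lemma isnorm_ge0 x : 0 <= N x.
Proof. by have := ler_isnormD x (- x); rewrite subrr isnorm0 isnormN; lra. Qed.

Lemma isnorm_gt0 x : x != 0 -> 0 < N x.
Proof.
move=> x0; rewrite lt_def isnorm_ge0 andbT.
by apply: contraNneq x0 => /isnorm_eq0 ->.
Qed.

Lemma isnorm_normalize x : x != 0 -> N ((N x)^-1 *: x) = 1.
Proof.
by move=> /isnorm_gt0 Nx; rewrite isnormZ normfV gtr0_norm // mulVf ?gt_eqF.
Qed.

Lemma isnorm_le_mx_norm : exists2 C, 0 <= C & forall x, N x <= C * `|x|.
Proof. exact: mx_seminorm_le isnormZ ler_isnormD. Qed.

Lemma isnorm_continuous : continuous N.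
Proof.
have [C _ NC] := isnorm_le_mx_norm.
apply: (lipschitz_continuous (C := C)) => x y; apply: le_trans (NC _).
rewrite ler_norml; have := ler_isnormD (x - y) y; have := ler_isnormD (y - x) x.
by rewrite !subrK -opprB isnormN; lra.
Qed.

(* The minimum of N on the compact unit sphere of the sup norm is positive. *)
Lemma mx_norm_le_isnorm : exists2 c, 0 < c & forall x, c * `|x| <= N x.
Proof.
pose S := [set v : 'cV[R]_k | `|v| = 1].
have Sx x : x != 0 -> S (`|x|^-1 *: x).
  by move=> x0; rewrite /S /= normrZ normfV normr_id mulVf ?normr_eq0.
have [[x0 /Sx Sx0]|all0] := pselect (exists x : 'cV[R]_k, x != 0); last first.
  exists 1 => // x; case: (eqVneq x 0) => [->|x0]; first by rewrite normr0 mulr0 isnorm0.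
  by exfalso; apply: all0; exists x.
have cS : compact S.
  apply: (@cV_bounded_closed_compact _ _ _ 1) => [v -> //|].
  exact: (preimage_closed (fun v _ => @norm_continuous _ _ v) (@closed_eq R 1)).
have [v0 /set_mem Sv0 v0_min] :=
  compact_EVT_min (ex_intro _ _ Sx0) cS (continuous_subspaceT isnorm_continuous).
exists (N v0); first by apply: isnorm_gt0; rewrite -normr_gt0 Sv0 ltr01.
move=> x; case: (eqVneq x 0) => [->|x_neq0]; first by rewrite normr0 mulr0 isnorm0.
have := v0_min _ (mem_set (Sx x x_neq0)); rewrite isnormZ normfV normr_id.
have nx : 0 < `|x| by rewrite normr_gt0.
by rewrite ler_pdivlMl // mulrC.
Qed.

Lemma isnorm_cvg0 (T : Type) (F : set_system T) {FF : Filter F} (u : T -> 'cV[R]_k) :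
  (fun t => N (u t)) @ F --> 0 -> u @ F --> (0 : 'cV[R]_k).
Proof.
move=> Nu; have [c c0 cN] := mx_norm_le_isnorm.
apply/cvgr0Pnorm_lt => e e0; near=> t.
have : `|N (u t)| < c * e by near: t; apply: cvgr0_norm_lt; rewrite ?mulr_gt0.
rewrite ger0_norm ?isnorm_ge0 // => Nut.
by rewrite -(ltr_pM2l c0); apply: le_lt_trans (cN _) Nut.
Unshelve. all: by end_near. Qed.

Lemma isnorm_ball_compact r : compact [set x | N x <= r].
Proof.
have [c c0 cN] := mx_norm_le_isnorm.
apply: (@cV_bounded_closed_compact _ _ _ (r / c)) => [v Nv|].
  by rewrite ler_pdivlMr // mulrC; apply: le_trans (cN v) Nv.
suff : closed (N @^-1` [set s | s <= r]) by [].
by apply: preimage_closed => [v _|]; [exact: isnorm_continuous | exact: closed_le].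
Qed.

Lemma isnorm_ball_convex r y z t :
  N y <= r -> N z <= r -> 0 <= t <= 1 -> N (y + t *: (z - y)) <= r.
Proof.
move=> Ny Nz /andP[t0 t1].
have -> : y + t *: (z - y) = (1 - t) *: y + t *: z.
  by rewrite scalerBr scalerBl scale1r addrCA addrC.
apply: le_trans (ler_isnormD _ _) _; rewrite !isnormZ !ger0_norm ?subr_ge0 //.
nra.
Qed.

End Norm.

Section Pairing.
Variables (R : realType) (k : nat).
Implicit Types c x : 'cV[R]_k.

Lemma pairing_is_linear c : linear (pairing c).
Proof. by move=> a x y; rewrite /pairing mulmxDr -scalemxAr !mxE. Qed.

HB.instance Definition _ c :=
  GRing.isLinear.Build R 'cV[R]_k R _ (pairing c) (pairing_is_linear c).

Lemma pairingE c x : pairing c x = \sum_i c i 0 * x i 0.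
Proof. by rewrite /pairing !mxE; apply: eq_bigr => i _; rewrite mxE. Qed.

Lemma pairingC c x : pairing c x = pairing x c.
Proof. by rewrite !pairingE; apply: eq_bigr => i _; rewrite mulrC. Qed.

Lemma pairing_gt0 x : x != 0 -> 0 < pairing x x.
Proof.
move=> x0; have sq_ge0 i : 0 <= x i 0 * x i 0 by rewrite -expr2 sqr_ge0.
rewrite pairingE lt_def sumr_ge0 ?andbT //; apply: contra x0 => /eqP x2_eq0.
apply/eqP/matrixP => i j; rewrite (ord1 j) mxE.
have /eqP := psumr_eq0P (fun i _ => sq_ge0 i) x2_eq0 (i := i) isT.
by rewrite mulf_eq0 orbb => /eqP.
Qed.

Lemma pairing_continuous (T : topologicalType) (f g : T -> 'cV[R]_k) :
  continuous f -> continuous g -> continuous (fun t => pairing (f t) (g t)).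
Proof.
move=> cf cg; rewrite (_ : (fun t => _) = fun t => \sum_i f t i 0 * g t i 0); last first.
  by apply: funext => t; rewrite pairingE.
apply: continuous_big => [|i _ t]; first exact: add_continuous.
apply: continuousM.
  exact: (continuous_comp (cf t) (@coord_continuous R k 1 i 0 (f t))).
exact: (continuous_comp (cg t) (@coord_continuous R k 1 i 0 (g t))).
Qed.

Lemma pairingZr a c x : pairing c (a *: x) = a * pairing c x.
Proof. exact: linearZ. Qed.

Lemma pairingBr c x y : pairing c (x - y) = pairing c x - pairing c y.
Proof. exact: linearB. Qed.

Lemma pairingZl a c x : pairing (a *: c) x = a * pairing c x.
Proof. by rewrite pairingC pairingZr pairingC. Qed.

Lemma pairingBl c d x : pairing (c - d) x = pairing c x - pairing d x.
Proof. by rewrite pairingC pairingBr !(pairingC x). Qed.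

Lemma pairing_expand c x t :
  pairing (c - t *: x) (c - t *: x) =
  pairing c c - 2 * t * pairing c x + t ^+ 2 * pairing x x.
Proof. by rewrite !pairingBl !pairingBr !pairingZl !pairingZr (pairingC x c); ring. Qed.

End Pairing.

Lemma pairing_trmx_mul (R : realType) m n (A : 'M[R]_(m, n)) h x :
  pairing (A^T *m h) x = pairing h (A *m x).
Proof. by rewrite /pairing trmx_mul trmxK mulmxA. Qed.

Lemma ge0_ge_sup (R : realType) (E : set R) x : 0 <= x -> ubound E x -> sup E <= x.
Proof.
move=> x0 Ex; have [E0|/nonemptyPn ->] := pselect (E !=set0); first exact: ge_sup.
by rewrite sup0.
Qed.

Section UnitSphere.
Variables (R : realType) (k : nat) (N : 'cV[R]_k -> R).
Hypothesis Nnorm : is_norm N.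

Lemma homogeneous_le_sup_sphere (f : 'cV[R]_k -> R) :
  (forall a x, 0 < a -> f (a *: x) = a * f x) ->
  (exists2 C, 0 <= C & forall x, f x <= C * `|x|) ->
  forall x, f x <= sup [set f y | y in [set y | N y = 1]] * N x.
Proof.
move=> fZ [C C0 fC] x; have [->|x0] := eqVneq x 0.
  have f0 : f 0 = 0 by have := fZ 2 0 (ltr0Sn _ 1); rewrite scaler0; lra.
  by rewrite f0 isnorm0 // mulr0.
pose y := (N x)^-1 *: x.
have Nx := isnorm_gt0 Nnorm x0.
have [c c0 cN] := mx_norm_le_isnorm Nnorm.
have fy : f y <= sup [set f y | y in [set y | N y = 1]].
  apply: sup_upper_bound; last by exists y => //; apply: isnorm_normalize.
  split; first by exists (f y), y => //; apply: isnorm_normalize.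
  exists (C / c) => _ [w /= Nw <-]; apply: le_trans (fC w) _.
  by rewrite ler_wpM2l // -div1r ler_pdivlMr // mulrC -Nw.
have -> : f x = N x * f y by rewrite -fZ // /y scalerA divff ?gt_eqF ?scale1r.
by rewrite mulrC ler_wpM2r // ltW.
Qed.

Lemma pairing_le_dualn c x : pairing c x <= dualn N c * N x.
Proof.
apply: homogeneous_le_sup_sphere => [a y _|]; first by rewrite linearZ.
have [C C0 hC] := mx_linear_le (pairing c).
by exists C => // y; apply: le_trans (ler_norm _) (hC y).
Qed.

Lemma mulmx_le_opnorm m (Nm : 'cV[R]_m -> R) (A : 'M[R]_(m, k)) x :
  is_norm Nm -> Nm (A *m x) <= opnorm N Nm A * N x.
Proof.
move=> Nm_norm; apply: (homogeneous_le_sup_sphere (f := fun y => Nm (A *m y))) => [a y a0|].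
  by rewrite -scalemxAr isnormZ // gtr0_norm.
have [C C0 hC] := isnorm_le_mx_norm Nm_norm.
have [D D0 hD] := mx_linear_le (@mulmx R m k 1 A).
exists (C * D) => [|y]; first exact: mulr_ge0.
by apply: le_trans (hC _) _; rewrite -mulrA ler_wpM2l //; exact: hD.
Qed.

End UnitSphere.

Lemma le0_of_linear_le_quadratic (R : realType) (d q : R) :
  (forall t, 0 < t <= 1 -> 2 * t * d <= t ^+ 2 * q) -> d <= 0.
Proof.
move=> dq; rewrite leNgt; apply/negP => d0.
have q_ge : 2 * d <= q by have := dq 1; rewrite ltr01 lexx expr1n mulr1 mul1r; apply.
have q0 : 0 < q by lra.
have t01 : 0 < d / q <= 1 by rewrite divr_gt0 //= ler_pdivrMr // mul1r; lra.
have := dq _ t01; have -> : (d / q) ^+ 2 * q = d * (d / q) by field; rewrite gt_eqF.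
have : 0 < d * (d / q) by rewrite mulr_gt0 // divr_gt0.
nra.
Qed.

(* The nearest point y0 of C to b gives the separating direction b - y0:
   minimality of |b - y|^2 along the segments from y0 is the first-order
   condition (b - y0, y - y0) <= 0. *)
Lemma compact_convex_separation (R : realType) k (C : set 'cV[R]_k) b :
  compact C -> C !=set0 ->
  (forall y z t, C y -> C z -> 0 <= t <= 1 -> C (y + t *: (z - y))) -> ~ C b ->
  exists h s, s < pairing h b /\ forall y, C y -> pairing h y <= s.
Proof.
move=> cC [y1 Cy1] convC Cb.
pose f y := pairing (b - y) (b - y).
have fc : continuous f.
  have cb : continuous (fun y : 'cV[R]_k => b - y).
    move=> y; apply: (@continuousB _ _ _ (cst b) id).
      exact: cst_continuous.
    exact: cvg_id.
  exact: pairing_continuous.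
have [y0 /set_mem Cy0 y0_min] :=
  compact_EVT_min (ex_intro _ _ Cy1) cC (continuous_subspaceT fc).
pose h := b - y0.
have hh : 0 < pairing h h.
  by apply: pairing_gt0; rewrite subr_eq0; apply/eqP => by0; apply: Cb; rewrite by0.
exists h, (pairing h y0); split; first by rewrite -subr_gt0 -linearB.
move=> y Cy; rewrite -subr_le0 -linearB.
apply: (le0_of_linear_le_quadratic (q := pairing (y - y0) (y - y0))) => t /andP[t0 t1].
have t01 : 0 <= t <= 1 by rewrite ltW.
have := y0_min _ (mem_set (convC _ _ _ Cy0 Cy t01)); rewrite /f.
have -> : b - (y0 + t *: (y - y0)) = h - t *: (y - y0) by rewrite opprD addrA.
rewrite pairing_expand -/h; lra.
Qed.

Section Duality.
Variables (R : realType) (k : nat) (N : 'cV[R]_k -> R).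
Hypothesis Nnorm : is_norm N.

Lemma mx_ball_separation m (A : 'M[R]_(m, k)) r b : 0 <= r ->
  (forall z, N z <= r -> A *m z != b) ->
  exists h s, s < pairing h b /\ forall z, N z <= r -> pairing h (A *m z) <= s.
Proof.
move=> r0 Ab.
have [||y z t [y' Ny' <-] [z' Nz' <-] t01|[z Nz /eqP]|h [s [sb hs]]] :=
  @compact_convex_separation _ _ (mulmx A @` [set z | N z <= r]) b.
- apply: continuous_compact; last exact: isnorm_ball_compact.
  by apply: continuous_subspaceT; apply: mx_linear_continuous.
- by exists (A *m 0), 0; rewrite //= isnorm0.
- exists (y' + t *: (z' - y')); first exact: isnorm_ball_convex.
  by rewrite mulmxDr -mulmxBr scalemxAr.
- by apply/negP; apply: Ab.
by exists h, s; split => // z Nz; apply: hs; exists z.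
Qed.

(* Otherwise y is strictly separated from the ball of radius (M + N y) / 2, and
   the separating functional, suitably rescaled, has dual norm at most 1. *)
Lemma isnorm_le_dual y M :
  0 <= M -> (forall c, dualn N c <= 1 -> pairing c y <= M) -> N y <= M.
Proof.
move=> M0 yM; rewrite leNgt; apply/negP => My.
pose r := (M + N y) / 2.
have r0 : 0 < r by rewrite /r; lra.
have [h [s [sy hs]]] : exists h s, s < pairing h y /\
    forall z, N z <= r -> pairing h (1%:M *m z) <= s.
  apply: mx_ball_separation => [|z Nz]; first exact: ltW.
  by rewrite mul1mx; apply/eqP => zy; move: Nz; rewrite zy /r; lra.
have s0 : 0 <= s by have := hs 0; rewrite mulmx0 linear0 isnorm0 //; apply; exact: ltW.
pose s' := (s + pairing h y) / 2.
have s'0 : 0 < s' by rewrite /s'; lra.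
have := yM ((r / s') *: h); rewrite pairingZl => /(_ _)/wrap[].
  apply: ge0_ge_sup => // _ [z /= Nz <-]; rewrite pairingZl mulrAC ler_pdivrMr // mul1r.
  have Nrz : N (r *: z) <= r by rewrite isnormZ // Nz mulr1 ger0_norm // ltW.
  by have := hs _ Nrz; rewrite mul1mx pairingZr /s'; lra.
rewrite mulrAC ler_pdivrMr //.
have : r * s' < r * pairing h y by rewrite ltr_pM2l // /s'; lra.
have : M * s' < r * s' by rewrite ltr_pM2r // /r; lra.
lra.
Qed.

Lemma mx_solve_norm_le m (Nm : 'cV[R]_m -> R) (A : 'M[R]_(m, k)) mu b :
  is_norm Nm -> 0 < mu -> (forall h, mu * dualn Nm h <= dualn N (A^T *m h)) ->
  exists2 z, A *m z = b & N z <= Nm b / mu.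
Proof.
move=> Nm_norm mu0 Areg; apply: contrapT => nosol.
have [b0|b_neq0] := eqVneq b 0.
  by apply: nosol; exists 0; rewrite ?mulmx0 ?b0 // !isnorm0 // mul0r.
pose r := Nm b / mu.
have r0 : 0 < r by rewrite divr_gt0 // isnorm_gt0.
have [h [s [sb hs]]] : exists h s, s < pairing h b /\
    forall z, N z <= r -> pairing h (A *m z) <= s.
  apply: mx_ball_separation => [|z Nz]; first exact: ltW.
  by apply/eqP => Azb; apply: nosol; exists z.
have s0 : 0 <= s by have := hs 0; rewrite mulmx0 linear0 isnorm0 //; apply; exact: ltW.
have dual_le : dualn N (A^T *m h) * r <= s.
  rewrite -ler_pdivlMr //; apply: ge0_ge_sup => [|_ [z /= Nz <-]].
    exact: divr_ge0 (ltW r0).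
  rewrite pairing_trmx_mul ler_pdivlMr // mulrC -linearZ scalemxAr; apply: hs.
  by rewrite isnormZ // Nz mulr1 ger0_norm // ltW.
have := pairing_le_dualn Nm_norm h b.
have -> : Nm b = mu * r by rewrite /r mulrC divfK ?gt_eqF.
have := ler_wpM2r (ltW r0) (Areg h).
lra.
Qed.

End Duality.

Lemma differentiable_is_derive_line (R : realType) (V W : normedModType R)
    (f : V -> W) x v t :
  differentiable f (t *: v + x) ->
  is_derive t 1 (fun s : R => f (s *: v + x)) ('d f (t *: v + x) v).
Proof.
move=> df.
have quotE : (fun h : R => h^-1 *: (((fun s => f (s *: v + x)) \o shift t) (h *: 1)
    - f (t *: v + x))) =
  (fun h : R => h^-1 *: ((f \o shift (t *: v + x)) (h *: v) - f (t *: v + x))).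
  by apply: funext => h /=; rewrite scalerDl [_%:A]mulr1 addrA.
split; first by rewrite /derivable quotE; exact: diff_derivable.
by rewrite /derive quotE -/(derive f (t *: v + x) v) deriveE.
Qed.

Section Taylor.
Variables (R : realType) (n m : nat) (Nn : 'cV[R]_n -> R) (Nm : 'cV[R]_m -> R).
Variables (P : 'cV[R]_n -> 'cV[R]_m) (J : 'cV[R]_n -> 'M[R]_(m, n)) (L : R).
Hypotheses (Nn_norm : is_norm Nn) (Nm_norm : is_norm Nm).
Hypothesis P_diff : forall x, differentiable P x /\ forall h, 'd P x h = J x *m h.
Hypothesis L_ge0 : 0 <= L.
Hypothesis J_lip : forall xa xb, opnorm Nn Nm (J xa - J xb) <= L * Nn (xa - xb).

Lemma is_derive_pairing_line (c : 'cV[R]_m) (x d : 'cV[R]_n) (t : R) :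
  is_derive t 1 (fun s : R => pairing c (P (s *: d + x)))
    (pairing c (J (t *: d + x) *m d)).
Proof.
have pc_cont : continuous (pairing c).
  by apply: (pairing_continuous (f := cst c) (g := id)) => y;
    [exact: cst_continuous | exact: cvg_id].
have Pd := (P_diff (t *: d + x)).1.
have := differentiable_is_derive_line
  (differentiable_comp Pd (linear_differentiable _ pc_cont)).
by rewrite diff_comp ?diff_lin //= ?(P_diff _).2 //; exact: linear_differentiable.
Qed.

(* Along the segment from x to x + d, the slope of s |-> (c, P(x + s d)) grows
   by at most L s ||d||^2 when c is in the dual unit ball; integrating the
   slope bound gives the quadratic remainder. *)
Lemma taylor_bound x d : Nm (P (x + d) - P x - J x *m d) <= L * Nn d ^+ 2 / 2.
Proof.
apply: (isnorm_le_dual Nm_norm) => [|c c1].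
  by rewrite divr_ge0 // mulr_ge0 // exprn_ge0 // isnorm_ge0.
pose a := pairing c (J x *m d); pose M := L * Nn d ^+ 2 / 2.
pose phi s := pairing c (P (s *: d + x)).
pose psi := (phi - a \*: id - M \*: (id * id)) : R -> R.
have dpsi (s : R) : is_derive s 1 psi
    (pairing c (J (s *: d + x) *m d) - a *: 1 - M *: (s *: 1 + s *: 1)).
  have dphi := is_derive_pairing_line c x d s.
  by apply: is_deriveB; apply: is_deriveZ; exact: is_deriveM.
have slope (s : R) : 0 <= s -> pairing c (J (s *: d + x) *m d) - a <= 2 * M * s.
  move=> s0; rewrite -pairingBr -mulmxBl.
  apply: le_trans (pairing_le_dualn Nm_norm _ _) _.
  apply: le_trans (ler_wpM2r (isnorm_ge0 Nm_norm _) c1) _; rewrite mul1r.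
  apply: le_trans (mulmx_le_opnorm Nn_norm _ _ Nm_norm) _.
  apply: le_trans (ler_wpM2r (isnorm_ge0 Nn_norm _) (J_lip _ _)) _.
  have -> : 2 * M * s = L * (s * Nn d) * Nn d by rewrite /M; field.
  by rewrite addrK isnormZ // ger0_norm.
have : psi 1 <= psi 0.
  apply: (@ler0_derive1_nincr _ psi 0 1) => //.
  - move=> s; rewrite in_itv /= => /andP[s0 _].
    rewrite derive1E (@derive_val _ _ _ _ _ _ _ (dpsi s)) ![_%:A]mulr1.
    by rewrite -[M *: _]/(M * _); have := slope s (ltW s0); lra.
  - apply: derivable_within_continuous => s _.
    exact: (@ex_derive _ _ _ _ _ _ _ (dpsi s)).
have psiE (s : R) : psi s = phi s - a * s - M * (s * s) by [].
rewrite !psiE /phi scale0r scale1r add0r (addrC d x) !pairingBr -/a -/M; lra.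
Qed.

End Taylor.

Lemma geometric_decay_cvg0 (R : realType) (a : nat -> R) (rho : R) :
  0 <= rho < 1 -> (forall k, 0 <= a k) -> (forall k, a k.+1 <= rho * a k) ->
  a @ \oo --> 0.
Proof.
move=> /andP[rho0 rho1] a0 arho.
have a_le k : a k <= geometric (a 0) rho k.
  elim: k => [|k IH] /=; first by rewrite expr0 mulr1.
  by apply: le_trans (arho k) _; rewrite exprS mulrCA ler_wpM2l.
apply: (@squeeze_cvgr _ _ _ _ (cst 0) (geometric (a 0) rho)); last 2 first.
- exact: cvg_cst.
- by apply: cvg_geometric; rewrite ger0_norm.
by apply: nearW => k; rewrite /= a0 a_le.
Qed.

Lemma telescoping_cvg (R : realType) r c (x : nat -> 'M[R]_(r, c)) (b : nat -> R) :
  (forall k, 0 <= b k) -> (forall k, `|x k.+1 - x k| <= b k - b k.+1) ->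
  b @ \oo --> 0 -> cvg (x @ \oo).
Proof.
move=> b0 xb b_cvg.
have tail p j : `|x (j + p)%N - x p| <= b p.
  suff : `|x (j + p)%N - x p| <= b p - b (j + p)%N by have := b0 (j + p)%N; lra.
  elim: j => [|j IH]; first by rewrite add0n !subrr normr0.
  have := ler_normD (x (j + p).+1 - x (j + p)%N) (x (j + p)%N - x p).
  by rewrite addrA subrK addSn; have := xb (j + p)%N; lra.
apply/cauchy_cvgP; apply: cauchy_exP => e e0.
have [N _ bN] : \forall k \near \oo, `|0 - b k| < e by apply: cvgr_dist_lt.
exists (x N), N => // k /= Nk.
rewrite -ball_normE /ball_ /= distrC -(subnK Nk).
apply: le_lt_trans (tail N (k - N)%N) _.
by have := bN N (leqnn N); rewrite sub0r normrN ger0_norm.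
Qed.

Section Newton.
Variables (R : realType) (n m : nat) (Nn : 'cV[R]_n -> R) (Nm : 'cV[R]_m -> R).
Variables (P : 'cV[R]_n -> 'cV[R]_m) (J : 'cV[R]_n -> 'M[R]_(m, n)) (L mu : R).
Hypotheses (Nn_norm : is_norm Nn) (Nm_norm : is_norm Nm).
Hypothesis P_diff : forall x, differentiable P x /\ forall h, 'd P x h = J x *m h.
Hypothesis L_gt0 : 0 < L.
Hypothesis J_lip : forall xa xb, opnorm Nn Nm (J xa - J xb) <= L * Nn (xa - xb).
Hypothesis mu_gt0 : 0 < mu.
Hypothesis J_reg : forall x h, mu * dualn Nm h <= dualn Nn ((J x)^T *m h).

Lemma newton_damped_step xk zk xk1 :
  newton_step Nn Nm P J L mu xk zk xk1 -> P xk != 0 ->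
  let g := Num.min 1 (mu ^+ 2 / (L * Nm (P xk))) in
  Nm (P xk1) <= (1 - g / 2) * Nm (P xk) /\ mu * Nn (xk1 - xk) <= g * Nm (P xk).
Proof.
move=> + P_neq0 g; rewrite /newton_step (negbTE P_neq0) => -[Jz zmin ->].
set a := Nm (P xk).
have a0 : 0 < a by apply: isnorm_gt0.
have Nz : Nn zk <= a / mu.
  have [z' Jz' Nz'] := mx_solve_norm_le Nn_norm (P xk) Nm_norm mu_gt0 (J_reg xk).
  exact: le_trans (zmin _ Jz') Nz'.
have Nz0 := isnorm_ge0 Nn_norm zk.
have g0 : 0 < g by rewrite lt_min ltr01 divr_gt0 ?exprn_gt0 ?mulr_gt0.
have gLa : g * (L * a) <= mu ^+ 2 by rewrite -ler_pdivlMr ?mulr_gt0 // ge_min lexx orbT.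
(* g L a <= mu^2 is what keeps the Taylor remainder below half of the
   first-order decrease g a. *)
have quad : L * g ^+ 2 * Nn zk ^+ 2 <= g * a.
  apply: (@le_trans _ _ (L * g ^+ 2 * (a / mu) ^+ 2)).
    apply: ler_wpM2l; first by rewrite mulr_ge0 ?exprn_ge0 ?ltW.
    by rewrite !expr2; exact: ler_pM.
  have -> : L * g ^+ 2 * (a / mu) ^+ 2 = g * a * (g * (L * a) / mu ^+ 2).
    by field; rewrite gt_eqF.
  by rewrite ler_piMr ?mulr_ge0 ?(ltW g0) ?(ltW a0) // ler_pdivrMr ?exprn_gt0 // mul1r.
have := taylor_bound Nn_norm Nm_norm P_diff (ltW L_gt0) J_lip xk (- (g *: zk)).
rewrite mulmxN -scalemxAr Jz opprK isnormN // isnormZ // gtr0_norm // => taylor.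
split.
- have -> : P (xk - g *: zk) = (P (xk - g *: zk) - P xk + g *: P xk) + (1 - g) *: P xk.
    by rewrite scalerBl scale1r addrA addrAC addrK subrK.
  apply: le_trans (ler_isnormD Nm_norm _ _) _.
  rewrite isnormZ // ger0_norm ?subr_ge0 ?ge_min ?lexx //.
  by move: taylor; rewrite exprMn -/a; nra.
- rewrite addrAC subrr add0r isnormN // isnormZ // gtr0_norm // mulrCA ler_pM2l //.
  by rewrite mulrC -ler_pdivlMr.
Qed.

Lemma newton_step_contract xk zk xk1 g :
  newton_step Nn Nm P J L mu xk zk xk1 ->
  0 <= g <= 1 -> g * (L * Nm (P xk)) <= mu ^+ 2 ->
  Nm (P xk1) <= (1 - g / 2) * Nm (P xk) /\
  mu * Nn (xk1 - xk) <= 2 * (Nm (P xk) - Nm (P xk1)).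
Proof.
move=> step /andP[g0 g1] gLa.
have [P0|P_neq0] := eqVneq (P xk) 0.
  move: step; rewrite /newton_step P0 eqxx => -[-> ->].
  by rewrite scaler0 subr0 subrr P0 !isnorm0 // !mulr0 subrr mulr0.
have a0 := isnorm_gt0 Nm_norm P_neq0.
have [dec step_le] := newton_damped_step step P_neq0.
set gk := Num.min 1 _ in dec step_le.
have ggk : g <= gk by rewrite le_min g1 ler_pdivlMr ?mulr_gt0.
split; first by apply: le_trans dec _; rewrite ler_wpM2r ?isnorm_ge0 //; lra.
have : gk * Nm (P xk) <= 2 * (Nm (P xk) - Nm (P xk1)) by lra.
exact: le_trans step_le.
Qed.

Variables (x z : nat -> 'cV[R]_n).
Hypothesis x_step : forall k, newton_step Nn Nm P J L mu (x k) (z k) (x k.+1).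

(* The step size is bounded below along the iterates because the residual
   never increases. *)
Lemma newton_iterates_contract : exists2 g, 0 < g <= 1 & forall k,
  Nm (P (x k.+1)) <= (1 - g / 2) * Nm (P (x k)) /\
  mu * Nn (x k.+1 - x k) <= 2 * (Nm (P (x k)) - Nm (P (x k.+1))).
Proof.
pose A := Nm (P (x 0)) + 1.
have A0 : 0 < A by rewrite ltr_wpDl ?isnorm_ge0.
pose g := Num.min 1 (mu ^+ 2 / (L * A)).
have g0 : 0 < g by rewrite lt_min ltr01 divr_gt0 ?exprn_gt0 ?mulr_gt0.
have g01 : 0 <= g <= 1 by rewrite ltW // ge_min lexx.
have gLA : g * (L * A) <= mu ^+ 2.
  by rewrite -ler_pdivlMr ?mulr_gt0 // ge_min lexx orbT.
have contract k (aA : Nm (P (x k)) <= A) := newton_step_contract (x_step k) g01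
  (le_trans (ler_wpM2l (ltW g0) (ler_wpM2l (ltW L_gt0) aA)) gLA).
have le_A r : r <= Nm (P (x 0)) -> r <= A by rewrite /A; lra.
have a_le k : Nm (P (x k)) <= Nm (P (x 0)).
  elim: k => // k IH; have [dec _] := contract k (le_A _ IH).
  apply: le_trans dec (le_trans _ IH).
  by rewrite ler_piMl ?isnorm_ge0 //; lra.
exists g; first by rewrite g0 ge_min lexx.
by move=> k; apply: contract; apply: le_A.
Qed.

Lemma newton_residual_cvg0 : (fun k => Nm (P (x k))) @ \oo --> 0.
Proof.
have [g /andP[g0 g1] contract] := newton_iterates_contract.
apply: (@geometric_decay_cvg0 _ _ (1 - g / 2)) => [|k|k].
- apply/andP; split; lra.
- exact: isnorm_ge0.
- exact: (contract k).1.
Qed.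

Lemma newton_iterates_cvg : cvg (x @ \oo).
Proof.
have [g _ contract] := newton_iterates_contract.
have [c c0 cN] := mx_norm_le_isnorm Nn_norm.
pose C := 2 / (mu * c).
have C0 : 0 < C by rewrite divr_gt0 ?mulr_gt0.
apply: (@telescoping_cvg _ _ _ x (fun k => C * Nm (P (x k)))) => [k|k|].
- by rewrite mulr_ge0 ?isnorm_ge0 ?ltW.
- rewrite -mulrBr /C mulrAC ler_pdivlMr ?mulr_gt0 // mulrCA.
  rewrite [_ * c]mulrC; apply: le_trans (ler_wpM2l (ltW mu_gt0) (cN _)) _.
  exact: (contract k).2.
- by rewrite -(mulr0 C); apply: cvgMl_tmp; exact: newton_residual_cvg0.
Qed.

End Newton.

Unset Implicit Arguments.

Theorem corollary4 (R : realType) (n m : nat)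
  (Nn : 'cV[R]_n -> R) (Nm : 'cV[R]_m -> R)
  (P : 'cV[R]_n -> 'cV[R]_m) (J : 'cV[R]_n -> 'M[R]_(m, n)) (L mu : R) :
  is_norm Nn -> is_norm Nm ->
  (forall x, differentiable P x /\ forall h, 'd P x h = J x *m h) ->
  0 < L ->
  (forall xa xb, opnorm Nn Nm (J xa - J xb) <= L * Nn (xa - xb)) ->
  0 < mu ->
  (forall x h, mu * dualn Nm h <= dualn Nn ((J x)^T *m h)) ->
  forall (x z : nat -> 'cV[R]_n),
    (forall k, newton_step Nn Nm P J L mu (x k) (z k) (x k.+1)) ->
    exists xs : 'cV[R]_n, x @ \oo --> xs /\ P xs = 0.
Proof.
move=> Nn_norm Nm_norm P_diff L_gt0 J_lip mu_gt0 J_reg x z x_step.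
have x_cvg := newton_iterates_cvg Nn_norm Nm_norm P_diff L_gt0 J_lip mu_gt0 J_reg x_step.
exists (lim (x @ \oo)); split => //.
have Px_lim : (P \o x) @ \oo --> P (lim (x @ \oo)).
  exact: continuous_cvg (differentiable_continuous (P_diff _).1) x_cvg.
have Px0 : (P \o x) @ \oo --> (0 : 'cV[R]_m).
  apply: (isnorm_cvg0 Nm_norm).
  exact: (newton_residual_cvg0 Nn_norm Nm_norm P_diff L_gt0 J_lip mu_gt0 J_reg x_step).
exact: cvg_unique Px_lim Px0.
Qed.
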